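(* Let $Q$ be a countable weak-latin quandle and $c$ a circular order on $Q$. Then there is an injective quandle homomorphism $\rho:Q\hookrightarrow\mathrm{Conj}(\mathrm{Homeo}_+(S^1))$, i.e. an injective map with $\rho(r*s)=\rho(s)\circ\rho(r)\circ\rho(s)^{-1}$ for all $r,s\in Q$.
   Context: Quandle: set $Q$ with operation $*$ satisfying $q*q=q$, unique right division, and $(q*r)*s=(q*s)*(r*s)$. $Q$ is weak-latin if for any $q,r\in Q$ there exists $\hat q\in Q$ such that $\hat q*q=\hat q*r$ implies $q=r$. A circular order on $Q$ is $c:Q^3\to\{-1,0,1\}$ with: $c(q_1,q_2,q_3)=0$ iff two entries coincide; $c(q_2,q_3,q_4)-c(q_1,q_3,q_4)+c(q_1,q_2,q_4)-c(q_1,q_2,q_3)=0$; $c(q_1*q,q_2*q,q_3*q)=c(q_1,q_2,q_3)$. Homeomorphisms act on the right; $\mathrm{Conj}(\mathrm{Homeo}_+(S^1))$ is the quandle structure $f*g=g\circ f\circ g^{-1}$ on $\mathrm{Homeo}_+(S^1)$. *)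

From Stdlib Require Import Reals ZArith.
Open Scope R_scope.

Definition is_quandle {Q : Type} (op : Q -> Q -> Q) : Prop :=
  (forall q, op q q = q) /\
  (forall q r, exists! p, op p q = r) /\
  (forall q r s, op (op q r) s = op (op q s) (op r s)).

(** weak-latin, literally as in the paper *)
Definition weak_latin {Q : Type} (op : Q -> Q -> Q) : Prop :=
  forall q r : Q, exists qh : Q, op qh q = op qh r -> q = r.

Definition countable (Q : Type) : Prop :=
  exists f : Q -> nat, forall x y, f x = f y -> x = y.

Definition circular_order {Q : Type} (op : Q -> Q -> Q) (c : Q -> Q -> Q -> Z) : Prop :=
  (forall q1 q2 q3, c q1 q2 q3 = (-1)%Z \/ c q1 q2 q3 = 0%Z \/ c q1 q2 q3 = 1%Z) /\
  (forall q1 q2 q3, c q1 q2 q3 = 0%Z <-> (q1 = q2 \/ q2 = q3 \/ q1 = q3)) /\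
  (forall q1 q2 q3 q4,
      (c q2 q3 q4 - c q1 q3 q4 + c q1 q2 q4 - c q1 q2 q3)%Z = 0%Z) /\
  (forall q q1 q2 q3, c (op q1 q) (op q2 q) (op q3 q) = c q1 q2 q3).

Definition S1 : Type := { p : R * R | fst p ^ 2 + snd p ^ 2 = 1 }.

Definition S1dist (x y : S1) : R :=
  sqrt ((fst (proj1_sig x) - fst (proj1_sig y)) ^ 2 +
        (snd (proj1_sig x) - snd (proj1_sig y)) ^ 2).

Definition S1_continuous (f : S1 -> S1) : Prop :=
  forall x (eps : R), 0 < eps ->
    exists delta, 0 < delta /\ forall y, S1dist x y < delta -> S1dist (f x) (f y) < eps.

(** orientation of a triple of points: sign of det(b - a, c - a);
    positive iff (a,b,c) is counterclockwise *)
Definition orient (a b c : S1) : R :=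
  let a := proj1_sig a in let b := proj1_sig b in let c := proj1_sig c in
  (fst b - fst a) * (snd c - snd a) - (snd b - snd a) * (fst c - fst a).

Record HomeoPlus : Type := {
  hp_fun : S1 -> S1;
  hp_inv : S1 -> S1;
  hp_inv_l : forall x, hp_inv (hp_fun x) = x;
  hp_inv_r : forall x, hp_fun (hp_inv x) = x;
  hp_cont : S1_continuous hp_fun;
  hp_inv_cont : S1_continuous hp_inv;
  hp_orient : forall a b c, 0 < orient a b c <-> 0 < orient (hp_fun a) (hp_fun b) (hp_fun c)
}.

Definition conj_op (f g : HomeoPlus) : S1 -> S1 :=
  fun x => hp_fun g (hp_fun f (hp_inv g x)).

(* Fix b in Q.  Cutting the circular order open at b gives a linear order <_b on Q, and
   Z x Q with the lexicographic order unrolls the circle.  With nu_s(x) = [x <_b s], the map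
   (n, x) |-> (n - nu_s(x) + nu_s(x*s), x*s) is an order automorphism phi_s lifting
   x |-> x*s, and the cocycle identity [x <_s y] = [x <_b y] + [y <_b s] - [x <_b s] gives
   phi_(r*s) = phi_s phi_r phi_s^-1.  After multiplying by the rationals, Cantor's
   back-and-forth theorem embeds this countable dense order densely into R, so each phi_s
   extends to an increasing homeomorphism of R; conjugating by stereographic projection
   yields homeomorphisms of S^1 fixing the pole.  If rho r = rho s then y*r = y*s for
   every y, hence r = s by weak-latinness. *)

From Stdlib Require Import Reals ZArith Lia Lra List.
From Stdlib Require Import Classical ClassicalEpsilon FunctionalExtensionality ProofIrrelevance.
From Stdlib Require Cantor.
Import ListNotations.

Record linear_order {A : Type} (lt : A -> A -> Prop) : Prop := {
  lo_irrefl : forall x, ~ lt x x;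
  lo_trans : forall x y z, lt x y -> lt y z -> lt x z;
  lo_total : forall x y, x <> y -> lt x y \/ lt y x }.

Record dense_linear_order {A : Type} (lt : A -> A -> Prop) : Prop := {
  dlo_linear : linear_order lt;
  dlo_dense : forall x y, lt x y -> exists z, lt x z /\ lt z y;
  dlo_no_max : forall x, exists y, lt x y;
  dlo_no_min : forall x, exists y, lt y x }.

Arguments lo_irrefl {A lt}. Arguments lo_trans {A lt}. Arguments lo_total {A lt}.
Arguments dlo_linear {A lt}. Arguments dlo_dense {A lt}.
Arguments dlo_no_max {A lt}. Arguments dlo_no_min {A lt}.

Lemma lo_asym {A} {lt : A -> A -> Prop} (H : linear_order lt) x y : lt x y -> ~ lt y x.
Proof. intros Hxy Hyx. exact (lo_irrefl H x (lo_trans H _ _ _ Hxy Hyx)). Qed.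

Lemma dense_linear_order_flip {A} (lt : A -> A -> Prop) :
  dense_linear_order lt -> dense_linear_order (fun x y => lt y x).
Proof.
  intros [[Hirr Htr Htot] Hd Hmax Hmin]. repeat split; eauto.
  intros x y Hxy. destruct (Hd y x Hxy) as [z []]. eauto.
Qed.

Definition lex {A B : Type} (ltA : A -> A -> Prop) (ltB : B -> B -> Prop) (p q : A * B) : Prop :=
  ltA (fst p) (fst q) \/ (fst p = fst q /\ ltB (snd p) (snd q)).

Lemma linear_order_lex {A B} (ltA : A -> A -> Prop) (ltB : B -> B -> Prop) :
  linear_order ltA -> linear_order ltB -> linear_order (lex ltA ltB).
Proof.
  intros HA HB. unfold lex. split.
  - intros [a b] [h|[_ h]]; [exact (lo_irrefl HA a h)|exact (lo_irrefl HB b h)].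
  - intros [a b] [a' b'] [a'' b''] [h1|[<- h1]] [h2|[<- h2]]; simpl in *.
    + left. exact (lo_trans HA _ _ _ h1 h2).
    + left. exact h1.
    + left. exact h2.
    + right. split; [reflexivity|exact (lo_trans HB _ _ _ h1 h2)].
  - intros [a b] [a' b'] Hne; simpl.
    destruct (classic (a = a')) as [<-|Ha].
    + assert (b <> b') by congruence. destruct (lo_total HB b b'); auto.
    + destruct (lo_total HA a a' Ha); auto.
Qed.

Lemma dense_linear_order_lex {A B} (ltA : A -> A -> Prop) (ltB : B -> B -> Prop) :
  linear_order ltA -> dense_linear_order ltB -> dense_linear_order (lex ltA ltB).
Proof.
  intros HA HB. unfold lex. split.
  - exact (linear_order_lex _ _ HA (dlo_linear HB)).
  - intros [a b] [a' b'] [h|[<- h]]; simpl in *.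
    + destruct (dlo_no_max HB b) as [b'' Hb]. exists (a, b''). simpl. auto.
    + destruct (dlo_dense HB b b' h) as [b'' []]. exists (a, b''). simpl. auto.
  - intros [a b]. destruct (dlo_no_max HB b) as [b' Hb]. exists (a, b'). simpl. auto.
  - intros [a b]. destruct (dlo_no_min HB b) as [b' Hb]. exists (a, b'). simpl. auto.
Qed.

Lemma lo_not_lt {A} {lt : A -> A -> Prop} (H : linear_order lt) x y : ~ lt y x -> x = y \/ lt x y.
Proof.
  intros Hyx. destruct (classic (x = y)) as [|Hne]; [auto|].
  destruct (lo_total H x y Hne); tauto.
Qed.

Lemma dlo_above {A} (lt : A -> A -> Prop) (H : dense_linear_order lt) x (L : list A) (hi : A -> Prop) :
  (forall h, In h L -> hi h -> lt x h) ->
  exists z, lt x z /\ forall h, In h L -> hi h -> lt z h.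
Proof.
  pose proof (dlo_linear H) as HL.
  induction L as [|a L IH]; intros Hx.
  - destruct (dlo_no_max H x) as [z Hz]. exists z. split; [exact Hz|intros ? []].
  - destruct IH as [z [Hxz Hz]]; [intros h Hh; apply Hx; right; exact Hh|].
    destruct (classic (hi a /\ ~ lt z a)) as [[Ha Hza]|Ha].
    + destruct (dlo_dense H x a (Hx a (or_introl eq_refl) Ha)) as [w [Hxw Hwa]].
      exists w. split; [exact Hxw|]. intros h [<-|Hh] Hh'; [exact Hwa|].
      apply (lo_trans HL _ a _ Hwa).
      destruct (lo_not_lt HL a z Hza) as [<-|Haz]; [|apply (lo_trans HL _ z _ Haz)];
        exact (Hz h Hh Hh').
    + exists z. split; [exact Hxz|]. intros h [<-|Hh] Hh'; [|auto].
      apply NNPP. tauto.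
Qed.

Lemma dlo_between {A} (lt : A -> A -> Prop) (H : dense_linear_order lt) (t0 : A) (L : list A)
  (lo hi : A -> Prop) :
  (forall l h, In l L -> In h L -> lo l -> hi h -> lt l h) ->
  exists z, forall y, In y L -> (lo y -> lt y z) /\ (hi y -> lt z y).
Proof.
  pose proof (dlo_linear H) as HL.
  induction L as [|a L IH]; intros Hlh.
  - exists t0. intros ? [].
  - destruct IH as [z Hz]; [intros l h Hl Hh; apply Hlh; right; assumption|].
    assert (Hlohi : lo a -> hi a -> False).
    { intros Hl Hh. exact (lo_irrefl HL a (Hlh a a (or_introl eq_refl) (or_introl eq_refl) Hl Hh)). }
    destruct (classic (lo a)) as [Hla|Hla]; [|destruct (classic (hi a)) as [Hha|Hha]].
    + destruct (classic (lt a z)) as [Haz|Haz].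
      { exists z. intros y [<-|Hy]; [tauto|auto]. }
      destruct (dlo_above _ H a L hi) as [w [Haw Hw]]; [intros h Hh; apply Hlh; simpl; auto|].
      exists w. intros y [<-|Hy]; [tauto|].
      split; [|auto]. intros Hly. apply (lo_trans HL _ z); [apply Hz; auto|].
      destruct (lo_not_lt HL z a Haz) as [->|Hza]; [exact Haw|exact (lo_trans HL _ _ _ Hza Haw)].
    + destruct (classic (lt z a)) as [Hza|Hza].
      { exists z. intros y [<-|Hy]; [tauto|auto]. }
      destruct (dlo_above _ (dense_linear_order_flip _ H) a L lo) as [w [Hwa Hw]];
        [intros l Hl Hll; apply Hlh; simpl; auto|].
      exists w. intros y [<-|Hy]; [tauto|].
      split; [auto|]. intros Hhy. apply (lo_trans HL _ z); [|apply Hz; auto].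
      destruct (lo_not_lt HL a z Hza) as [<-|Haz]; [exact Hwa|exact (lo_trans HL _ _ _ Hwa Haz)].
    + exists z. intros y [<-|Hy]; [tauto|auto].
Qed.

Section PartialIso.
Context {A B : Type} (ltA : A -> A -> Prop) (ltB : B -> B -> Prop).

Definition partial_iso (P : list (A * B)) : Prop :=
  forall x y x' y', In (x, y) P -> In (x', y') P -> (ltA x x' <-> ltB y y').

Lemma partial_iso_eq P x y x' y' : linear_order ltA -> linear_order ltB ->
  partial_iso P -> In (x, y) P -> In (x', y') P -> (x = x' <-> y = y').
Proof.
  intros HA HB HP Hxy Hxy'. split; intros E.
  - subst x'. apply NNPP. intros Hne.
    destruct (lo_total HB y y' Hne) as [L|L];
      apply (lo_irrefl HA x); [apply (HP _ _ _ _ Hxy Hxy')|apply (HP _ _ _ _ Hxy' Hxy)]; exact L.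
  - subst y'. apply NNPP. intros Hne.
    destruct (lo_total HA x x' Hne) as [L|L];
      apply (lo_irrefl HB y); [apply (HP _ _ _ _ Hxy Hxy')|apply (HP _ _ _ _ Hxy' Hxy)]; exact L.
Qed.

Lemma partial_iso_forth (y0 : B) P x : linear_order ltA -> dense_linear_order ltB ->
  partial_iso P -> exists y, partial_iso ((x, y) :: P).
Proof.
  intros HA HB HP. pose proof (dlo_linear HB) as HB'.
  destruct (classic (exists y, In (x, y) P)) as [[y Hy]|Hnew].
  { exists y. intros x1 y1 x2 y2 [E1|H1] [E2|H2];
      try injection E1 as <- <-; try injection E2 as <- <-; apply HP; assumption. }
  destruct (dlo_between ltB HB y0 (map snd P)
              (fun y => exists x', In (x', y) P /\ ltA x' x)
              (fun y => exists x', In (x', y) P /\ ltA x x')) as [z Hz].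
  { intros l h _ _ [xl [Hl Hxl]] [xh [Hh Hxh]].
    apply (HP _ _ _ _ Hl Hh). exact (lo_trans HA _ _ _ Hxl Hxh). }
  assert (Hnew_z : forall x' y', In (x', y') P ->
            (ltA x' x <-> ltB y' z) /\ (ltA x x' <-> ltB z y')).
  { intros x' y' Hp.
    assert (Hy' : In y' (map snd P)) by exact (in_map snd _ _ Hp).
    assert (Hne : x <> x') by (intros <-; eauto).
    destruct (lo_total HA x x' Hne) as [L|L].
    - assert (Lz : ltB z y') by (apply (Hz y' Hy'); eauto).
      split; split; intros; auto; exfalso;
        [exact (lo_asym HA _ _ L H) | exact (lo_asym HB' _ _ Lz H)].
    - assert (Lz : ltB y' z) by (apply (Hz y' Hy'); eauto).
      split; split; intros; auto; exfalso;
        [exact (lo_asym HA _ _ L H) | exact (lo_asym HB' _ _ Lz H)]. }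
  exists z. intros x1 y1 x2 y2 [E1|H1] [E2|H2];
    try injection E1 as <- <-; try injection E2 as <- <-.
  - split; intros L; exfalso; [exact (lo_irrefl HA _ L)|exact (lo_irrefl HB' _ L)].
  - apply (Hnew_z _ _ H2).
  - apply (Hnew_z _ _ H1).
  - apply HP; assumption.
Qed.
End PartialIso.

Lemma partial_iso_swap {A B} (ltA : A -> A -> Prop) (ltB : B -> B -> Prop) P :
  partial_iso ltA ltB P -> partial_iso ltB ltA (map (fun p => (snd p, fst p)) P).
Proof.
  intros HP y x y' x' H H'.
  apply in_map_iff in H as [[a b] [E H]]. apply in_map_iff in H' as [[a' b'] [E' H']].
  simpl in E, E'. injection E as <- <-. injection E' as <- <-.
  symmetry. exact (HP _ _ _ _ H H').
Qed.

Lemma partial_iso_back {A B} (ltA : A -> A -> Prop) (ltB : B -> B -> Prop) (x0 : A) P y :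
  dense_linear_order ltA -> linear_order ltB ->
  partial_iso ltA ltB P -> exists x, partial_iso ltA ltB ((x, y) :: P).
Proof.
  intros HA HB HP.
  destruct (partial_iso_forth ltB ltA x0 _ y HB HA (partial_iso_swap _ _ P HP)) as [x Hx].
  exists x. apply partial_iso_swap in Hx. simpl in Hx.
  rewrite map_map, map_ext with (g := fun p => p), map_id in Hx by (intros [? ?]; reflexivity).
  exact Hx.
Qed.

Definition enumerable (T : Type) : Prop := exists e : nat -> T, forall x, exists n, e n = x.

Section BackAndForth.
Context {A B : Type} (ltA : A -> A -> Prop) (ltB : B -> B -> Prop).
Hypotheses (HA : dense_linear_order ltA) (HB : dense_linear_order ltB).
Variables (a : nat -> A) (b : nat -> B).
Hypotheses (Ha : forall x, exists n, a n = x) (Hb : forall y, exists n, b n = y).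

Fixpoint stage (n : nat) : list (A * B) :=
  match n with
  | 0 => []
  | S n =>
      let P := stage n in
      let y := epsilon (inhabits (b 0)) (fun y => partial_iso ltA ltB ((a n, y) :: P)) in
      let P' := (a n, y) :: P in
      let x := epsilon (inhabits (a 0)) (fun x => partial_iso ltA ltB ((x, b n) :: P')) in
      (x, b n) :: P'
  end.

Lemma stage_partial_iso n : partial_iso ltA ltB (stage n).
Proof.
  induction n as [|n IH]; simpl.
  - intros ? ? ? ? [].
  - apply epsilon_spec, (partial_iso_back _ _ (a 0) _ _ HA (dlo_linear HB)).
    apply epsilon_spec, (partial_iso_forth _ _ (b 0) _ _ (dlo_linear HA) HB IH).
Qed.

Lemma stage_incl n m : (n <= m)%nat -> incl (stage n) (stage m).
Proof.
  induction 1 as [|m _ IH]; [apply incl_refl|].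
  intros p Hp. simpl. right. right. exact (IH p Hp).
Qed.

Lemma stage_dom x : exists y n, In (x, y) (stage n).
Proof. destruct (Ha x) as [n <-]. eexists _, (S n). simpl. right. left. reflexivity. Qed.

Lemma stage_ran y : exists x n, In (x, y) (stage n).
Proof. destruct (Hb y) as [n <-]. eexists _, (S n). simpl. left. reflexivity. Qed.

Lemma stage_common x y n x' y' n' : In (x, y) (stage n) -> In (x', y') (stage n') ->
  In (x, y) (stage (n + n')) /\ In (x', y') (stage (n + n')).
Proof. split; [apply (stage_incl n)|apply (stage_incl n')]; auto; lia. Qed.

Definition back_and_forth (x : A) : B :=
  epsilon (inhabits (b 0)) (fun y => exists n, In (x, y) (stage n)).

Lemma back_and_forth_stage x : exists n, In (x, back_and_forth x) (stage n).
Proof. unfold back_and_forth. apply epsilon_spec. destruct (stage_dom x) as [y [n H]]. eauto. Qed.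

Lemma back_and_forth_iso :
  (forall x x', ltA x x' <-> ltB (back_and_forth x) (back_and_forth x')) /\
  (forall y, exists x, back_and_forth x = y).
Proof.
  split.
  - intros x x'.
    destruct (back_and_forth_stage x) as [n Hn], (back_and_forth_stage x') as [n' Hn'].
    destruct (stage_common _ _ _ _ _ _ Hn Hn'). apply (stage_partial_iso (n + n')); assumption.
  - intros y. destruct (stage_ran y) as [x [n Hn]]. exists x.
    destruct (back_and_forth_stage x) as [n' Hn']. destruct (stage_common _ _ _ _ _ _ Hn' Hn).
    apply (partial_iso_eq ltA ltB (stage (n' + n)) x _ x y (dlo_linear HA) (dlo_linear HB));
      [apply stage_partial_iso|assumption|assumption|reflexivity].
Qed.
End BackAndForth.

Theorem cantor_iso {A B} (ltA : A -> A -> Prop) (ltB : B -> B -> Prop) :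
  dense_linear_order ltA -> dense_linear_order ltB -> enumerable A -> enumerable B ->
  exists f : A -> B, (forall x x', ltA x x' <-> ltB (f x) (f x')) /\ (forall y, exists x, f x = y).
Proof. intros HA HB [a Ha] [b Hb]. eexists. exact (back_and_forth_iso ltA ltB HA HB a b Ha Hb). Qed.

Lemma enumerable_prod A B : enumerable A -> enumerable B -> enumerable (A * B).
Proof.
  intros [a Ha] [b Hb]. exists (fun n => let (i, j) := Cantor.of_nat n in (a i, b j)).
  intros [x y]. destruct (Ha x) as [i <-], (Hb y) as [j <-].
  exists (Cantor.to_nat (i, j)). rewrite Cantor.cancel_of_to. reflexivity.
Qed.

Definition Z_of_code (n : nat) : Z := let (i, j) := Cantor.of_nat n in (Z.of_nat i - Z.of_nat j)%Z.

Lemma Z_of_code_surj z : exists n, Z_of_code n = z.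
Proof.
  exists (Cantor.to_nat (Z.to_nat z, Z.to_nat (- z))). unfold Z_of_code.
  rewrite Cantor.cancel_of_to. lia.
Qed.

Lemma enumerable_Z : enumerable Z.
Proof. exists Z_of_code. exact Z_of_code_surj. Qed.

Lemma enumerable_of_injection T (t0 : T) (f : T -> nat) :
  (forall x y, f x = f y -> x = y) -> enumerable T.
Proof.
  intros Hf. exists (fun n => epsilon (inhabits t0) (fun x => f x = n)).
  intros x. exists (f x). apply Hf. apply (epsilon_spec (inhabits t0) (fun x' => f x' = f x)). eauto.
Qed.

Definition rat_of_code (n : nat) : R :=
  let (i, k) := Cantor.of_nat n in IZR (Z_of_code i) / INR (S k).

Lemma rat_of_code_dense u v : u < v -> exists n, u < rat_of_code n < v.
Proof.
  intros Huv.
  destruct (archimed (/ (v - u))) as [Hk _].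
  set (k := Z.to_nat (up (/ (v - u)))).
  set (N := INR (S k)).
  assert (HN : / (v - u) < N).
  { unfold N, k. rewrite S_INR, INR_IZR_INZ, Z2Nat.id; [lra|].
    apply le_IZR. pose proof (Rinv_0_lt_compat (v - u)). lra. }
  assert (HN0 : 0 < N) by (unfold N; apply lt_0_INR; lia).
  assert (Hgap : 1 < (v - u) * N).
  { apply (Rmult_lt_compat_l (v - u)) in HN; [|lra]. rewrite Rinv_r in HN; lra. }
  destruct (archimed (u * N)) as [Hm1 Hm2].
  destruct (Z_of_code_surj (up (u * N))) as [i Hi].
  exists (Cantor.to_nat (i, k)). unfold rat_of_code. rewrite Cantor.cancel_of_to, Hi. fold N.
  split.
  - apply (Rmult_lt_reg_r N); [exact HN0|]. unfold Rdiv. rewrite Rmult_assoc, Rinv_l; lra.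
  - apply (Rmult_lt_reg_r N); [exact HN0|]. unfold Rdiv. rewrite Rmult_assoc, Rinv_l; lra.
Qed.

Definition ratR : Type := { r : R | exists n, rat_of_code n = r }.

Definition ratR_lt (u v : ratR) : Prop := proj1_sig u < proj1_sig v.

Lemma ratR_between u v : u < v -> exists w : ratR, u < proj1_sig w < v.
Proof.
  intros Huv. destruct (rat_of_code_dense u v Huv) as [n Hn].
  exists (exist _ (rat_of_code n) (ex_intro _ n eq_refl)). exact Hn.
Qed.

Lemma enumerable_ratR : enumerable ratR.
Proof.
  exists (fun n => exist _ (rat_of_code n) (ex_intro _ n eq_refl)).
  intros [r [n <-]]. exists n. reflexivity.
Qed.

Lemma dense_linear_order_ratR : dense_linear_order ratR_lt.
Proof.
  unfold ratR_lt. repeat split.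
  - intros x. lra.
  - intros x y z. lra.
  - intros [x Hx] [y Hy] Hne; simpl. destruct (Rtotal_order x y) as [|[->|]]; auto.
    exfalso. apply Hne. f_equal. apply proof_irrelevance.
  - intros x y Hxy. destruct (ratR_between _ _ Hxy) as [w Hw]. exists w. lra.
  - intros x. destruct (ratR_between (proj1_sig x) (proj1_sig x + 1)) as [w Hw]; [lra|]. exists w. lra.
  - intros x. destruct (ratR_between (proj1_sig x - 1) (proj1_sig x)) as [w Hw]; [lra|]. exists w. lra.
Qed.

Definition strictly_increasing (F : R -> R) : Prop := forall a b, a < b -> F a < F b.

Section Extension.
Variables (X : Type) (emb : X -> R).
Hypothesis emb_dense : forall u v, u < v -> exists x, u < emb x < v.

Definition emb_auto (g : X -> X) : Prop :=
  (forall x y, emb x < emb y <-> emb (g x) < emb (g y)) /\ (forall y, exists x, g x = y).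

Lemma emb_auto_le g x y : emb_auto g -> emb x <= emb y -> emb (g x) <= emb (g y).
Proof.
  intros [Hg _] H. destruct (Rle_or_lt (emb (g x)) (emb (g y))) as [|Hlt]; [assumption|].
  apply Hg in Hlt. lra.
Qed.

Lemma emb_auto_comp g h : emb_auto g -> emb_auto h -> emb_auto (fun x => g (h x)).
Proof.
  intros [Mg Sg] [Mh Sh]. split.
  - intros x y. rewrite (Mh x y). apply Mg.
  - intros y. destruct (Sg y) as [z <-]. destruct (Sh z) as [x <-]. eauto.
Qed.

Lemma emb_auto_id : emb_auto (fun x => x).
Proof. split; [tauto|eauto]. Qed.

Definition separates (g : X -> X) (t s : R) : Prop :=
  (forall x, emb x <= t -> emb (g x) <= s) /\ (forall x, t <= emb x -> s <= emb (g x)).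

Lemma separates_exists g : emb_auto g -> forall t, exists s, separates g t s.
Proof.
  intros Hg t.
  set (E := fun v => exists x, emb x <= t /\ v = emb (g x)).
  destruct (emb_dense (t - 1) t) as [x0 Hx0]; [lra|].
  destruct (emb_dense t (t + 1)) as [y0 Hy0]; [lra|].
  destruct (completeness E) as [m [Hub Hlub]].
  - exists (emb (g y0)). intros v [x [Hx ->]]. apply emb_auto_le; [exact Hg|lra].
  - exists (emb (g x0)), x0. split; [lra|reflexivity].
  - exists m. split.
    + intros x Hx. apply Hub. exists x. auto.
    + intros x Hx. apply Hlub. intros v [x' [Hx' ->]]. apply emb_auto_le; [exact Hg|lra].
Qed.

Lemma separates_unique g : emb_auto g -> forall t s s', separates g t s -> separates g t s' -> s = s'.
Proof.
  intros Hg t.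
  assert (Hle : forall s s', separates g t s -> separates g t s' -> s <= s').
  { intros s s' [_ Hs] [Hs' _]. apply Rnot_lt_le. intros Hlt.
    destruct (emb_dense s' s Hlt) as [y Hy]. destruct (proj2 Hg y) as [x <-].
    destruct (Rle_or_lt (emb x) t) as [Hx|Hx].
    - specialize (Hs' x Hx). lra.
    - specialize (Hs x (Rlt_le _ _ Hx)). lra. }
  intros s s' H H'. apply Rle_antisym; auto.
Qed.

Definition extend (g : X -> X) (t : R) : R := epsilon (inhabits 0) (separates g t).

Lemma extend_spec g : emb_auto g -> forall t, separates g t (extend g t).
Proof. intros Hg t. unfold extend. apply epsilon_spec. exact (separates_exists g Hg t). Qed.

Lemma extend_eq g : emb_auto g -> forall t s, separates g t s -> extend g t = s.
Proof. intros Hg t s Hs. exact (separates_unique g Hg t _ _ (extend_spec g Hg t) Hs). Qed.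

Lemma extend_emb g : emb_auto g -> forall x, extend g (emb x) = emb (g x).
Proof.
  intros Hg x. apply extend_eq; [exact Hg|].
  split; intros y Hy; apply emb_auto_le; assumption.
Qed.

Lemma extend_comp g h : emb_auto g -> emb_auto h ->
  forall t, extend g (extend h t) = extend (fun x => g (h x)) t.
Proof.
  intros Hg Hh t. symmetry. apply extend_eq; [exact (emb_auto_comp g h Hg Hh)|].
  destruct (extend_spec h Hh t) as [H1 H2], (extend_spec g Hg (extend h t)) as [H3 H4].
  split; auto.
Qed.

Lemma extend_id t : extend (fun x => x) t = t.
Proof. apply extend_eq; [exact emb_auto_id|]. split; auto. Qed.

Lemma extend_increasing g : emb_auto g -> strictly_increasing (extend g).
Proof.
  intros Hg t t' Htt'.
  destruct (emb_dense t t' Htt') as [x1 Hx1].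
  destruct (emb_dense (emb x1) t') as [x2 Hx2]; [lra|].
  pose proof (proj2 (extend_spec g Hg t) x1 ltac:(lra)).
  pose proof (proj1 (extend_spec g Hg t') x2 ltac:(lra)).
  pose proof (proj1 (proj1 Hg x1 x2) ltac:(lra)). lra.
Qed.
End Extension.

Definition R_continuous (F : R -> R) : Prop :=
  forall t eps, 0 < eps -> exists delta, 0 < delta /\
    forall t', Rabs (t' - t) < delta -> Rabs (F t' - F t) < eps.

Definition R_proper (F : R -> R) : Prop :=
  forall M, exists N, forall t, N < Rabs t -> M < Rabs (F t).

Section IncreasingBijection.
Variables (F G : R -> R).
Hypotheses (HF : strictly_increasing F) (HFG : forall t, F (G t) = t).

Lemma increasing_lt_iff a b : a < b <-> F a < F b.
Proof.
  split; [apply HF|]. intros H. destruct (Rtotal_order a b) as [|[->|Hba]]; [assumption|lra|].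
  apply HF in Hba. lra.
Qed.

Lemma increasing_inverse : strictly_increasing G.
Proof. intros a b Hab. apply increasing_lt_iff. rewrite !HFG. exact Hab. Qed.

Lemma increasing_surj_continuous : R_continuous F.
Proof.
  intros t eps Heps.
  assert (H1 : G (F t - eps) < t) by (apply increasing_lt_iff; rewrite HFG; lra).
  assert (H2 : t < G (F t + eps)) by (apply increasing_lt_iff; rewrite HFG; lra).
  exists (Rmin (t - G (F t - eps)) (G (F t + eps) - t)).
  split; [apply Rmin_glb_lt; lra|]. intros t' Ht'.
  pose proof (Rmin_l (t - G (F t - eps)) (G (F t + eps) - t)).
  pose proof (Rmin_r (t - G (F t - eps)) (G (F t + eps) - t)).
  apply Rabs_def2 in Ht'.
  assert (F (G (F t - eps)) < F t') by (apply HF; lra).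
  assert (F t' < F (G (F t + eps))) by (apply HF; lra).
  rewrite !HFG in *. apply Rabs_def1; lra.
Qed.

Lemma increasing_surj_proper : R_proper F.
Proof.
  intros M. exists (Rmax (Rabs (G (Rabs M))) (Rabs (G (- Rabs M)))). intros t Ht.
  pose proof (Rmax_l (Rabs (G (Rabs M))) (Rabs (G (- Rabs M)))).
  pose proof (Rmax_r (Rabs (G (Rabs M))) (Rabs (G (- Rabs M)))).
  pose proof (Rle_abs M). pose proof (Rle_abs (G (Rabs M))).
  pose proof (Rle_abs (- G (- Rabs M))). rewrite Rabs_Ropp in *.
  pose proof (Rle_abs (F t)). pose proof (Rle_abs (- F t)). rewrite Rabs_Ropp in *.
  destruct (Rle_or_lt 0 t).
  - rewrite (Rabs_right t) in Ht by lra.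
    assert (F (G (Rabs M)) < F t) by (apply HF; lra). rewrite HFG in *. lra.
  - rewrite (Rabs_left t) in Ht by lra.
    assert (F t < F (G (- Rabs M))) by (apply HF; lra). rewrite HFG in *. lra.
Qed.
End IncreasingBijection.

Lemma one_plus_sq_pos t : 0 < 1 + t ^ 2.
Proof. nra. Qed.

Lemma pt_on_circle t :
  fst ((1 - t ^ 2) / (1 + t ^ 2), 2 * t / (1 + t ^ 2)) ^ 2 +
  snd ((1 - t ^ 2) / (1 + t ^ 2), 2 * t / (1 + t ^ 2)) ^ 2 = 1.
Proof. simpl. pose proof (one_plus_sq_pos t). field. lra. Qed.

(* Inverse stereographic projection from the pole (-1, 0). *)
Definition pt (t : R) : S1 := exist _ _ (pt_on_circle t).

Lemma pole_on_circle : fst (-1, 0) ^ 2 + snd (-1, 0) ^ 2 = 1.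
Proof. simpl. ring. Qed.

Definition pole : S1 := exist _ _ pole_on_circle.

Definition chart (P : S1) : R := snd (proj1_sig P) / (1 + fst (proj1_sig P)).

Lemma S1_eq (P P' : S1) : proj1_sig P = proj1_sig P' -> P = P'.
Proof. destruct P, P'. simpl. intros ->. f_equal. apply proof_irrelevance. Qed.

Lemma pt_not_pole t : fst (proj1_sig (pt t)) <> -1.
Proof.
  cbn [pt pole proj1_sig fst snd] in *. pose proof (one_plus_sq_pos t). intros E.
  assert (H1 : (1 - t ^ 2) / (1 + t ^ 2) * (1 + t ^ 2) = 1 - t ^ 2) by (field; lra).
  rewrite E in H1. lra.
Qed.

Lemma chart_pt t : chart (pt t) = t.
Proof.
  unfold chart. cbn [pt pole proj1_sig fst snd] in *. pose proof (one_plus_sq_pos t).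
  replace (1 + (1 - t ^ 2) / (1 + t ^ 2)) with (2 / (1 + t ^ 2)) by (field; lra).
  field. lra.
Qed.

Lemma pt_inj a b : pt a = pt b -> a = b.
Proof. intros E. rewrite <- (chart_pt a), <- (chart_pt b), E. reflexivity. Qed.

Lemma S1_cases P : P = pole \/ exists t, P = pt t.
Proof.
  destruct P as [[x y] h]. cbn [fst snd] in h.
  destruct (Req_dec x (-1)) as [->|Hx].
  - left. apply S1_eq. cbn [pt pole proj1_sig fst snd] in *. f_equal. nra.
  - right. exists (y / (1 + x)). apply S1_eq. cbn [pt pole proj1_sig fst snd] in *.
    assert (Hx1 : 0 < 1 + x) by nra.
    assert (Ht : 1 + (y / (1 + x)) ^ 2 = 2 / (1 + x)).
    { replace ((y / (1 + x)) ^ 2) with (y ^ 2 / (1 + x) ^ 2) by (field; lra).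
      replace (y ^ 2) with (1 - x ^ 2) by nra. field. lra. }
    assert (Ht' : 1 - (y / (1 + x)) ^ 2 = 2 * x / (1 + x)).
    { replace (1 - (y / (1 + x)) ^ 2) with (2 - (1 + (y / (1 + x)) ^ 2)) by ring.
      rewrite Ht. field. lra. }
    rewrite Ht, Ht'. f_equal; field; lra.
Qed.

Definition lift (F : R -> R) (P : S1) : S1 :=
  if Req_EM_T (fst (proj1_sig P)) (-1) then P else pt (F (chart P)).

Lemma lift_pole F : lift F pole = pole.
Proof. unfold lift. destruct (Req_EM_T _ _) as [_|Hne]; [reflexivity|]. simpl in Hne. lra. Qed.

Lemma lift_pt F t : lift F (pt t) = pt (F t).
Proof.
  unfold lift. destruct (Req_EM_T _ _) as [E|_]; [destruct (pt_not_pole t E)|].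
  rewrite chart_pt. reflexivity.
Qed.

Lemma lift_inverse F G : (forall t, G (F t) = t) -> forall P, lift G (lift F P) = P.
Proof.
  intros HGF P. destruct (S1_cases P) as [->|[t ->]].
  - rewrite !lift_pole. reflexivity.
  - rewrite !lift_pt, HGF. reflexivity.
Qed.

Definition chord_sq (P P' : S1) : R :=
  (fst (proj1_sig P) - fst (proj1_sig P')) ^ 2 + (snd (proj1_sig P) - snd (proj1_sig P')) ^ 2.

Lemma chord_sq_nonneg P P' : 0 <= chord_sq P P'.
Proof. unfold chord_sq. pose proof (pow2_ge_0 (fst (proj1_sig P) - fst (proj1_sig P'))).
  pose proof (pow2_ge_0 (snd (proj1_sig P) - snd (proj1_sig P'))). lra. Qed.

Lemma S1dist_lt P P' d : 0 < d -> S1dist P P' < d <-> chord_sq P P' < d ^ 2.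
Proof.
  intros Hd. unfold S1dist. fold (chord_sq P P').
  rewrite <- (sqrt_pow2 d) at 1 by lra.
  split; intros H.
  - apply sqrt_lt_0_alt in H. exact H.
  - apply sqrt_lt_1_alt. split; [apply chord_sq_nonneg|exact H].
Qed.

Lemma chord_sq_sym P P' : chord_sq P P' = chord_sq P' P.
Proof. unfold chord_sq. ring. Qed.

Lemma chord_sq_refl P : chord_sq P P = 0.
Proof. unfold chord_sq. ring. Qed.

Lemma chord_sq_pt_pt a b : chord_sq (pt a) (pt b) * ((1 + a ^ 2) * (1 + b ^ 2)) = 4 * (a - b) ^ 2.
Proof.
  unfold chord_sq. cbn [pt proj1_sig fst snd].
  pose proof (one_plus_sq_pos a). pose proof (one_plus_sq_pos b). field. lra.
Qed.

Lemma chord_sq_pole_pt t : chord_sq pole (pt t) * (1 + t ^ 2) = 4.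
Proof.
  unfold chord_sq. cbn [pole pt proj1_sig fst snd]. pose proof (one_plus_sq_pos t). field. lra.
Qed.

Lemma chord_sq_pt_pt_le a b : chord_sq (pt a) (pt b) <= 4 * (a - b) ^ 2.
Proof.
  rewrite <- chord_sq_pt_pt. pose proof (chord_sq_nonneg (pt a) (pt b)).
  pose proof (pow2_ge_0 a). pose proof (pow2_ge_0 b).
  assert (1 <= (1 + a ^ 2) * (1 + b ^ 2)) by nra. nra.
Qed.

(* With K = 1 + s^2 and D = (t - s)^2 we get 4 D < d^2 K (1 + t^2) <= d^2 K (2 K + 2 D), and
   d^2 K <= 1 absorbs the D on the right, leaving D < (d K)^2. *)
Lemma chord_sq_pt_pt_lt s t d : 0 < d -> d * (1 + s ^ 2) <= 1 ->
  chord_sq (pt s) (pt t) < d ^ 2 -> Rabs (t - s) < d * (1 + s ^ 2).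
Proof.
  intros Hd HdK Hc. pose proof (chord_sq_pt_pt s t) as E.
  set (K := 1 + s ^ 2) in *. set (D := (s - t) ^ 2) in E.
  assert (HK : 1 <= K) by (unfold K; pose proof (pow2_ge_0 s); lra).
  pose proof (one_plus_sq_pos t).
  assert (HD4 : 4 * D < d ^ 2 * (K * (1 + t ^ 2))).
  { rewrite <- E. apply Rmult_lt_compat_r; [nra|exact Hc]. }
  assert (Ht : 1 + t ^ 2 <= 2 * K + 2 * D) by (unfold K, D; pose proof (pow2_ge_0 (2 * s - t)); nra).
  assert (HD0 : 0 <= D) by apply pow2_ge_0.
  assert (ED : D = (t - s) * (t - s)) by (unfold D; ring).
  clearbody K D.
  assert (Hd1 : d <= 1) by nra.
  assert (Hd2 : d ^ 2 * K <= 1) by (replace (d ^ 2 * K) with (d * (d * K)) by ring; nra).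
  assert (d ^ 2 * (K * (1 + t ^ 2)) <= d ^ 2 * K * (2 * K + 2 * D)).
  { rewrite <- Rmult_assoc. apply Rmult_le_compat_l; [nra|exact Ht]. }
  assert (d ^ 2 * K * D <= D) by nra.
  rewrite <- (Rabs_right (d * K)) by nra.
  apply Rsqr_lt_abs_0. unfold Rsqr. nra.
Qed.

Lemma chord_sq_pole_pt_lt t r : chord_sq pole (pt t) < r ^ 2 <-> 4 < r ^ 2 * (1 + t ^ 2).
Proof.
  rewrite <- (chord_sq_pole_pt t). pose proof (one_plus_sq_pos t).
  split; intros H'; [apply Rmult_lt_compat_r|apply (Rmult_lt_reg_r (1 + t ^ 2))]; assumption.
Qed.

Lemma lift_continuous_at_pole F : R_proper F -> forall eps, 0 < eps ->
  exists delta, 0 < delta /\ forall Q, S1dist pole Q < delta -> S1dist (lift F pole) (lift F Q) < eps.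
Proof.
  intros HF eps Heps. destruct (HF (2 / eps)) as [N HN].
  set (A := Rabs N + 1). assert (HA : 1 <= A) by (unfold A; pose proof (Rabs_pos N); lra).
  exists (1 / A). split; [apply Rdiv_lt_0_compat; lra|].
  intros Q HQ. rewrite lift_pole. apply S1dist_lt; [exact Heps|].
  destruct (S1_cases Q) as [->|[t ->]]; [rewrite lift_pole, chord_sq_refl; nra|].
  rewrite lift_pt. apply chord_sq_pole_pt_lt.
  apply S1dist_lt, chord_sq_pole_pt_lt in HQ; [|apply Rdiv_lt_0_compat; lra].
  assert (Ht : A < Rabs t).
  { assert (E : (1 / A) ^ 2 * A ^ 2 = 1) by (field; lra).
    assert (4 * A ^ 2 < 1 + t ^ 2) by nra.
    rewrite <- (Rabs_right A) by lra. apply Rsqr_lt_abs_0. unfold Rsqr. nra. }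
  assert (HFt : 2 / eps < Rabs (F t)).
  { apply HN. unfold A in Ht. pose proof (Rle_abs N). lra. }
  assert (E : 2 / eps * eps = 2) by (field; lra).
  assert (2 < eps * Rabs (F t)) by nra.
  rewrite <- (pow2_abs (F t)). nra.
Qed.

Lemma lift_continuous_at_pt F s : R_continuous F -> forall eps, 0 < eps ->
  exists delta, 0 < delta /\
    forall Q, S1dist (pt s) Q < delta -> S1dist (lift F (pt s)) (lift F Q) < eps.
Proof.
  intros HF eps Heps. destruct (HF s (eps / 2)) as [dl [Hdl Hcont]]; [lra|].
  set (K := 1 + s ^ 2). assert (HK : 1 <= K) by (unfold K; pose proof (pow2_ge_0 s); lra).
  set (delta := Rmin 1 dl / K).
  assert (HdK : delta * K = Rmin 1 dl) by (unfold delta; field; lra).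
  assert (Hmin : 0 < Rmin 1 dl) by (apply Rmin_glb_lt; lra).
  pose proof (Rmin_l 1 dl). pose proof (Rmin_r 1 dl).
  assert (Hdelta : 0 < delta) by (unfold delta; apply Rdiv_lt_0_compat; lra).
  exists delta. split; [exact Hdelta|]. intros Q HQ.
  rewrite lift_pt. apply S1dist_lt in HQ; [|exact Hdelta]. apply S1dist_lt; [exact Heps|].
  destruct (S1_cases Q) as [->|[t ->]].
  - exfalso. rewrite chord_sq_sym, chord_sq_pole_pt_lt in HQ. fold K in HQ.
    assert (delta <= 1) by nra. nra.
  - rewrite lift_pt.
    assert (Hts : Rabs (t - s) < dl) by
      (apply (chord_sq_pt_pt_lt s t delta) in HQ; [fold K in HQ; lra|exact Hdelta|fold K; lra]).
    specialize (Hcont t Hts). rewrite Rabs_minus_sym in Hcont.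
    pose proof (chord_sq_pt_pt_le (F s) (F t)) as Hle.
    rewrite <- (pow2_abs (F s - F t)) in Hle.
    pose proof (Rabs_pos (F s - F t)).
    assert (Rabs (F s - F t) * Rabs (F s - F t) < eps / 2 * (eps / 2))
      by (apply Rmult_le_0_lt_compat; assumption).
    nra.
Qed.

Lemma lift_continuous F : R_continuous F -> R_proper F -> S1_continuous (lift F).
Proof.
  intros Hc Hp P. destruct (S1_cases P) as [->|[s ->]].
  - exact (lift_continuous_at_pole F Hp).
  - exact (lift_continuous_at_pt F s Hc).
Qed.

Definition same_sign (a b : R) : Prop := (a = 0 /\ b = 0) \/ 0 < a * b.

Lemma same_sign_pos a b : same_sign a b -> (0 < a <-> 0 < b).
Proof. intros [[-> ->]|H]; [tauto|split; intros; nra]. Qed.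

Lemma same_sign_mul a a' b b' : same_sign a a' -> same_sign b b' -> same_sign (a * b) (a' * b').
Proof.
  intros [[-> ->]|Ha] [[-> ->]|Hb]; [left; split; ring..|].
  right. replace (a * b * (a' * b')) with ((a * a') * (b * b')) by ring. nra.
Qed.

Lemma same_sign_pos_pos a b : 0 < a -> 0 < b -> same_sign a b.
Proof. intros. right. nra. Qed.

Lemma same_sign_increasing F u v : strictly_increasing F -> same_sign (v - u) (F v - F u).
Proof.
  intros HF. destruct (Rtotal_order u v) as [H|[<-|H]].
  - pose proof (HF _ _ H). right. nra.
  - left. split; ring.
  - pose proof (HF _ _ H). right. nra.
Qed.

Lemma orient_rot a b c : orient a b c = orient b c a.
Proof. unfold orient. ring. Qed.

Lemma orient_aac a c : orient a a c = 0.
Proof. unfold orient. ring. Qed.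

Lemma orient_aba a b : orient a b a = 0.
Proof. unfold orient. ring. Qed.

Lemma orient_abb a b : orient a b b = 0.
Proof. unfold orient. ring. Qed.

Lemma orient_pole_pt u v :
  orient pole (pt u) (pt v) = (v - u) * (4 / ((1 + u ^ 2) * (1 + v ^ 2))).
Proof.
  unfold orient. cbn [pole pt proj1_sig fst snd].
  pose proof (one_plus_sq_pos u). pose proof (one_plus_sq_pos v). field. lra.
Qed.

Lemma orient_pt u v w : orient (pt u) (pt v) (pt w) =
  (v - u) * (w - v) * (w - u) * (4 / ((1 + u ^ 2) * (1 + v ^ 2) * (1 + w ^ 2))).
Proof.
  unfold orient. cbn [pt proj1_sig fst snd].
  pose proof (one_plus_sq_pos u). pose proof (one_plus_sq_pos v). pose proof (one_plus_sq_pos w).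
  field. lra.
Qed.

Lemma lift_orient_pole F u v : strictly_increasing F ->
  same_sign (orient pole (pt u) (pt v)) (orient pole (lift F (pt u)) (lift F (pt v))).
Proof.
  intros HF. rewrite !lift_pt, !orient_pole_pt.
  apply same_sign_mul; [apply same_sign_increasing, HF|].
  pose proof (one_plus_sq_pos u). pose proof (one_plus_sq_pos v).
  pose proof (one_plus_sq_pos (F u)). pose proof (one_plus_sq_pos (F v)).
  apply same_sign_pos_pos; apply Rdiv_lt_0_compat; nra.
Qed.

Lemma lift_orient F a b c : strictly_increasing F ->
  same_sign (orient a b c) (orient (lift F a) (lift F b) (lift F c)).
Proof.
  intros HF.
  destruct (S1_cases a) as [->|[u ->]], (S1_cases b) as [->|[v ->]], (S1_cases c) as [->|[w ->]];
    rewrite ?lift_pole;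
    try (rewrite ?orient_aac, ?orient_aba, ?orient_abb; left; split; reflexivity).
  - apply lift_orient_pole, HF.
  - rewrite (orient_rot (pt u)), (orient_rot (lift F (pt u))). apply lift_orient_pole, HF.
  - rewrite <- (orient_rot pole (pt u)), <- (orient_rot pole (lift F (pt u))).
    apply lift_orient_pole, HF.
  - rewrite !lift_pt, !orient_pt.
    apply same_sign_mul; [repeat apply same_sign_mul; apply same_sign_increasing, HF|].
    pose proof (one_plus_sq_pos u). pose proof (one_plus_sq_pos v). pose proof (one_plus_sq_pos w).
    pose proof (one_plus_sq_pos (F u)). pose proof (one_plus_sq_pos (F v)).
    pose proof (one_plus_sq_pos (F w)).
    apply same_sign_pos_pos; apply Rdiv_lt_0_compat; nra.
Qed.

Definition homeo_of_increasing (F G : R -> R) (HF : strictly_increasing F)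
  (HGF : forall t, G (F t) = t) (HFG : forall t, F (G t) = t) : HomeoPlus := {|
  hp_fun := lift F;
  hp_inv := lift G;
  hp_inv_l := lift_inverse F G HGF;
  hp_inv_r := lift_inverse G F HFG;
  hp_cont := lift_continuous F (increasing_surj_continuous F G HF HFG)
                               (increasing_surj_proper F G HF HFG);
  hp_inv_cont := lift_continuous G (increasing_surj_continuous G F (increasing_inverse F G HF HFG) HGF)
                                   (increasing_surj_proper G F (increasing_inverse F G HF HFG) HGF);
  hp_orient := fun a b c => same_sign_pos _ _ (lift_orient F a b c HF) |}.

Definition eqdec {T : Type} (x y : T) : {x = y} + {x <> y} := excluded_middle_informative (x = y).

Section CutOrder.
Context {Q : Type} {op : Q -> Q -> Q} {c : Q -> Q -> Q -> Z} (hc : circular_order op c).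
Local Open Scope Z_scope.

Lemma c_range x y z : c x y z = -1 \/ c x y z = 0 \/ c x y z = 1.
Proof. apply hc. Qed.

Lemma c_zero x y z : c x y z = 0 <-> x = y \/ y = z \/ x = z.
Proof. apply hc. Qed.

Lemma c_cocycle q1 q2 q3 q4 : c q2 q3 q4 - c q1 q3 q4 + c q1 q2 q4 - c q1 q2 q3 = 0.
Proof. apply hc. Qed.

Lemma c_act q x y z : c (op x q) (op y q) (op z q) = c x y z.
Proof. apply hc. Qed.

Lemma c_eq12 x z : c x x z = 0.
Proof. apply c_zero. auto. Qed.

Lemma c_eq13 x y : c x y x = 0.
Proof. apply c_zero. auto. Qed.

Lemma c_eq23 x y : c x y y = 0.
Proof. apply c_zero. auto. Qed.

Lemma c_swap12 x y z : c y x z = - c x y z.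
Proof. pose proof (c_cocycle x y x z). rewrite c_eq12, c_eq13 in H. lia. Qed.

Lemma c_swap23 x y z : c x z y = - c x y z.
Proof. pose proof (c_cocycle x y z y). rewrite c_eq13, c_eq23 in H. lia. Qed.

Lemma c_rot x y z : c y z x = c x y z.
Proof. rewrite c_swap23, c_swap12. lia. Qed.

Lemma c_rot' x y z : c z x y = c x y z.
Proof. symmetry. apply c_rot. Qed.

Lemma c_swap13 x y z : c z y x = - c x y z.
Proof. rewrite c_swap12, c_rot. reflexivity. Qed.

Lemma c_nondegenerate x y z : x <> y -> y <> z -> x <> z -> c x y z = -1 \/ c x y z = 1.
Proof. intros Hxy Hyz Hxz. destruct (c_range x y z) as [|[H|]]; auto. apply c_zero in H. tauto. Qed.

(* The linear order obtained by cutting the circle open at [o], which becomes the least element. *)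
Definition cut_lt (o x y : Q) : bool :=
  if eqdec x y then false else if eqdec x o then true else c o x y =? 1.

(* Brute force on a finite configuration of points: [split_points] decides every coincidence,
   then [c_abstract] replaces each remaining value of [c] by a variable in {-1, 1} and its
   permutations by +- that variable. *)
Ltac split_points :=
  repeat match goal with
  | p : Q, q : Q |- _ =>
      lazymatch goal with
      | _ : p <> q |- _ => fail
      | _ : q <> p |- _ => fail
      | _ => destruct (eqdec p q) as [->|]
      end
  end.

Ltac c_abstract :=
  rewrite ?c_eq12, ?c_eq13, ?c_eq23 in *;
  repeat match goal with
  | |- context [c ?x ?y ?z] =>
      rewrite ?(c_swap12 x y z), ?(c_swap23 x y z), ?(c_swap13 x y z), ?(c_rot x y z),
              ?(c_rot' x y z) in *;
      let H := fresh in
      assert (H : c x y z = -1 \/ c x y z = 1) by (apply c_nondegenerate; congruence);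
      generalize dependent (c x y z); intros
  end.

Lemma cut_lt_cocycle b s x y :
  Z.b2z (cut_lt s x y) = Z.b2z (cut_lt b x y) + Z.b2z (cut_lt b y s) - Z.b2z (cut_lt b x s).
Proof.
  pose proof (c_cocycle b s x y). unfold cut_lt.
  split_points; repeat (destruct (eqdec _ _); try congruence);
    c_abstract; repeat match goal with |- context [?v =? 1] => destruct (Z.eqb_spec v 1) end;
    simpl; lia.
Qed.

Lemma cut_lt_irrefl o x : cut_lt o x x = false.
Proof. unfold cut_lt. destruct (eqdec x x); congruence. Qed.

Lemma cut_lt_total o x y : x <> y -> Z.b2z (cut_lt o x y) + Z.b2z (cut_lt o y x) = 1.
Proof.
  intros Hxy. pose proof (cut_lt_cocycle o x x y) as H.
  rewrite cut_lt_irrefl in H. unfold cut_lt at 1 in H.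
  destruct (eqdec x y), (eqdec x x); try congruence. simpl in H. lia.
Qed.

Lemma cut_lt_trans o x y z : cut_lt o x y = true -> cut_lt o y z = true -> cut_lt o x z = true.
Proof.
  intros Hxy Hyz. pose proof (cut_lt_cocycle o z x y) as H.
  rewrite Hxy, Hyz in H. destruct (cut_lt z x y), (cut_lt o x z); simpl in H; lia.
Qed.

Lemma linear_order_cut_lt o : linear_order (fun x y => cut_lt o x y = true).
Proof.
  split.
  - intros x. rewrite cut_lt_irrefl. discriminate.
  - exact (cut_lt_trans o).
  - intros x y Hxy. pose proof (cut_lt_total o x y Hxy).
    destruct (cut_lt o x y), (cut_lt o y x); simpl in *; auto; lia.
Qed.

Lemma cut_lt_act o x y s : (forall u v, op u s = op v s -> u = v) ->
  cut_lt (op o s) (op x s) (op y s) = cut_lt o x y.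
Proof.
  intros Hinj. unfold cut_lt. rewrite c_act.
  destruct (eqdec x y) as [->|Hxy].
  - destruct (eqdec (op y s) (op y s)); congruence.
  - destruct (eqdec (op x s) (op y s)) as [E|_]; [apply Hinj in E; contradiction|].
    destruct (eqdec x o) as [->|Hxo].
    + destruct (eqdec (op o s) (op o s)); congruence.
    + destruct (eqdec (op x s) (op o s)) as [E|_]; [apply Hinj in E; contradiction|reflexivity].
Qed.
End CutOrder.

Arguments cut_lt {Q} c o x y.

Section QuandleAction.
Context {Q : Type} {op : Q -> Q -> Q} {c : Q -> Q -> Q -> Z}.
Context (hQ : is_quandle op) (hc : circular_order op c) (b : Q).
Local Open Scope Z_scope.

Lemma op_idem q : op q q = q.
Proof. apply hQ. Qed.

Lemma op_dist q r s : op (op q r) s = op (op q s) (op r s).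
Proof. apply hQ. Qed.

Lemma op_inj s x y : op x s = op y s -> x = y.
Proof.
  intros E. destruct (proj1 (proj2 hQ) s (op y s)) as [p [_ U]].
  rewrite <- (U x E), <- (U y eq_refl). reflexivity.
Qed.

Definition rdiv (x s : Q) : Q := epsilon (inhabits x) (fun p => op p s = x).

Lemma op_rdiv x s : op (rdiv x s) s = x.
Proof.
  unfold rdiv. apply epsilon_spec.
  destruct (proj1 (proj2 hQ) s x) as [p [H _]]. eauto.
Qed.

Lemma rdiv_op x s : rdiv (op x s) s = x.
Proof. apply (op_inj s). apply op_rdiv. Qed.

Lemma cut_lt_act_fixed s x y : cut_lt c s (op x s) (op y s) = cut_lt c s x y.
Proof. rewrite <- (op_idem s) at 1. apply (cut_lt_act hc), op_inj. Qed.

Definition below (s x : Q) : Z := Z.b2z (cut_lt c b x s).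

Definition lift_lt : Z * Q -> Z * Q -> Prop := lex Z.lt (fun x y => cut_lt c b x y = true).

Lemma lift_lt_iff m x n y : lift_lt (m, x) (n, y) <-> m < n + Z.b2z (cut_lt c b x y).
Proof.
  unfold lift_lt, lex. simpl.
  destruct (cut_lt c b x y); simpl; intuition (try lia; discriminate).
Qed.

(* The lift of [x |-> op x s] to [Z * Q] that fixes every point over [s]. *)
Definition phi (s : Q) (p : Z * Q) : Z * Q :=
  (fst p - below s (snd p) + below s (op (snd p) s), op (snd p) s).

Definition phi_inv (s : Q) (p : Z * Q) : Z * Q :=
  (fst p + below s (rdiv (snd p) s) - below s (snd p), rdiv (snd p) s).

Lemma phi_phi_inv s p : phi s (phi_inv s p) = p.
Proof. destruct p as [n x]. unfold phi, phi_inv. simpl. rewrite op_rdiv. f_equal. lia. Qed.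

Lemma phi_inv_phi s p : phi_inv s (phi s p) = p.
Proof. destruct p as [n x]. unfold phi, phi_inv. simpl. rewrite rdiv_op. f_equal. lia. Qed.

Lemma phi_lt s p q : lift_lt p q <-> lift_lt (phi s p) (phi s q).
Proof.
  destruct p as [m x], q as [n y]. unfold phi, below. simpl. rewrite !lift_lt_iff.
  pose proof (cut_lt_cocycle hc b s x y).
  pose proof (cut_lt_cocycle hc b s (op x s) (op y s)).
  rewrite cut_lt_act_fixed in *. lia.
Qed.

(* By the cocycle identity, [below a u - below s u] equals [Z.b2z (cut_lt c s u a)] up to a
   constant, and [cut_lt c s] is invariant under [op _ s]. *)
Lemma phi_hom r s p : phi (op r s) p = phi s (phi r (phi_inv s p)).
Proof.
  destruct p as [n x]. unfold phi, phi_inv, below. simpl.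
  set (y := rdiv x s).
  assert (Hx : x = op y s) by (unfold y; rewrite op_rdiv; reflexivity).
  assert (Hxrs : op x (op r s) = op (op y r) s) by (rewrite Hx; symmetry; apply op_dist).
  rewrite Hxrs. f_equal.
  pose proof (cut_lt_cocycle hc b s x (op r s)).
  pose proof (cut_lt_cocycle hc b s (op (op y r) s) (op r s)).
  pose proof (cut_lt_cocycle hc b s y r).
  pose proof (cut_lt_cocycle hc b s (op y r) r).
  rewrite Hx, !cut_lt_act_fixed in *. lia.
Qed.
End QuandleAction.

Arguments rdiv {Q} op x s.
Arguments below {Q} c b s x.
Arguments lift_lt {Q} c b.
Arguments phi {Q} op c b s p.
Arguments phi_inv {Q} op c b s p.

Section Representation.
Context {Q : Type} {op : Q -> Q -> Q} {c : Q -> Q -> Q -> Z}.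
Context (hQ : is_quandle op) (hc : circular_order op c) (b : Q).

(* The rational factor makes the order dense and without endpoints. *)
Definition cover : Type := ((Z * Q) * ratR)%type.

Definition cover_lt : cover -> cover -> Prop := lex (lift_lt c b) ratR_lt.

Lemma dense_linear_order_cover : dense_linear_order cover_lt.
Proof.
  apply dense_linear_order_lex; [|exact dense_linear_order_ratR].
  apply linear_order_lex; [|exact (linear_order_cut_lt hc b)].
  split; intros; lia.
Qed.

Lemma enumerable_cover : enumerable Q -> enumerable cover.
Proof.
  intros HQ. apply enumerable_prod; [apply enumerable_prod|]; auto using enumerable_Z, enumerable_ratR.
Qed.

Definition Phi (s : Q) (x : cover) : cover := (phi op c b s (fst x), snd x).
Definition Phi_inv (s : Q) (x : cover) : cover := (phi_inv op c b s (fst x), snd x).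

Lemma Phi_Phi_inv s x : Phi s (Phi_inv s x) = x.
Proof. destruct x. unfold Phi, Phi_inv. simpl. rewrite (phi_phi_inv hQ). reflexivity. Qed.

Lemma Phi_inv_Phi s x : Phi_inv s (Phi s x) = x.
Proof. destruct x. unfold Phi, Phi_inv. simpl. rewrite (phi_inv_phi hQ). reflexivity. Qed.

Lemma Phi_lt s x y : cover_lt x y <-> cover_lt (Phi s x) (Phi s y).
Proof.
  destruct x as [p u], y as [q v]. unfold cover_lt, lex, Phi. simpl.
  rewrite (phi_lt hQ hc b s p q).
  assert (phi op c b s p = phi op c b s q <-> p = q).
  { split; [|intros ->; reflexivity]. intros E.
    rewrite <- (phi_inv_phi (c := c) hQ b s p), <- (phi_inv_phi (c := c) hQ b s q), E. reflexivity. }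
  tauto.
Qed.

Lemma Phi_inv_lt s x y : cover_lt x y <-> cover_lt (Phi_inv s x) (Phi_inv s y).
Proof. rewrite (Phi_lt s (Phi_inv s x)), !Phi_Phi_inv. reflexivity. Qed.

Variable emb : cover -> R.
Hypotheses (emb_lt : forall x y, cover_lt x y <-> emb x < emb y)
  (emb_dense : forall u v, u < v -> exists x, u < emb x < v).

Lemma emb_inj x y : emb x = emb y -> x = y.
Proof.
  intros E. apply NNPP. intros Hne.
  destruct (lo_total (dlo_linear dense_linear_order_cover) x y Hne) as [L|L]; apply emb_lt in L; lra.
Qed.

Lemma emb_auto_Phi s : emb_auto cover emb (Phi s).
Proof.
  split; [intros x y; rewrite <- !emb_lt; apply Phi_lt|].
  intros y. exists (Phi_inv s y). apply Phi_Phi_inv.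
Qed.

Lemma emb_auto_Phi_inv s : emb_auto cover emb (Phi_inv s).
Proof.
  split; [intros x y; rewrite <- !emb_lt; apply Phi_inv_lt|].
  intros y. exists (Phi s y). apply Phi_inv_Phi.
Qed.

Lemma extend_inverse g h : emb_auto cover emb g -> emb_auto cover emb h -> (forall x, h (g x) = x) ->
  forall t, extend cover emb h (extend cover emb g t) = t.
Proof.
  intros Hg Hh Hhg t. rewrite (extend_comp cover emb emb_dense h g Hh Hg).
  replace (fun x => h (g x)) with (fun x : cover => x) by (apply functional_extensionality; auto).
  apply (extend_id cover emb emb_dense).
Qed.

Definition rho (s : Q) : HomeoPlus :=
  homeo_of_increasing (extend cover emb (Phi s)) (extend cover emb (Phi_inv s))
    (extend_increasing cover emb emb_dense (Phi s) (emb_auto_Phi s))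
    (extend_inverse _ _ (emb_auto_Phi s) (emb_auto_Phi_inv s) (Phi_inv_Phi s))
    (extend_inverse _ _ (emb_auto_Phi_inv s) (emb_auto_Phi s) (Phi_Phi_inv s)).

Lemma rho_hom r s : hp_fun (rho (op r s)) = conj_op (rho r) (rho s).
Proof.
  apply functional_extensionality. intros P. unfold conj_op. simpl.
  destruct (S1_cases P) as [->|[t ->]]; [rewrite !lift_pole; reflexivity|].
  rewrite !lift_pt. f_equal.
  rewrite (extend_comp cover emb emb_dense (Phi r) (Phi_inv s)),
    (extend_comp cover emb emb_dense (Phi s));
    auto using emb_auto_Phi, emb_auto_Phi_inv, emb_auto_comp.
  f_equal. apply functional_extensionality. intros [p u]. unfold Phi, Phi_inv. simpl.
  rewrite (phi_hom hQ hc b r s p). reflexivity.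
Qed.

Lemma rho_faithful r s : hp_fun (rho r) = hp_fun (rho s) -> forall y, op y r = op y s.
Proof.
  intros E y. simpl in E.
  set (x := ((0%Z, y), exist _ (rat_of_code 0) (ex_intro _ 0%nat eq_refl)) : cover).
  assert (H : lift (extend cover emb (Phi r)) (pt (emb x)) =
              lift (extend cover emb (Phi s)) (pt (emb x)))
    by (rewrite E; reflexivity).
  rewrite !lift_pt in H. apply pt_inj in H.
  rewrite !(extend_emb cover emb emb_dense) in H by apply emb_auto_Phi.
  apply emb_inj in H. unfold Phi, phi in H. simpl in H. congruence.
Qed.
End Representation.

Arguments cover Q : clear implicits.
Arguments cover_lt {Q} c b.

Theorem lemma3p3 (Q : Type) (op : Q -> Q -> Q) (c : Q -> Q -> Q -> Z)
  (hQ : is_quandle op) (hwl : weak_latin op) (hcount : countable Q)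
  (hc : circular_order op c) :
  exists rho : Q -> HomeoPlus,
    (forall r s, hp_fun (rho r) = hp_fun (rho s) -> r = s) /\
    (forall r s, hp_fun (rho (op r s)) = conj_op (rho r) (rho s)).
Proof.
  destruct (classic (inhabited Q)) as [[b]|HQ].
  2: { exists (fun q => False_rect _ (HQ (inhabits q))). split; intros r; destruct (HQ (inhabits r)). }
  destruct hcount as [f Hf].
  destruct (cantor_iso (cover_lt c b) ratR_lt (dense_linear_order_cover hc b)
              dense_linear_order_ratR (enumerable_cover (enumerable_of_injection Q b f Hf))
              enumerable_ratR) as [iso [Hiso Hsurj]].
  set (emb := fun x => proj1_sig (iso x)).
  assert (emb_dense : forall u v, u < v -> exists x, u < emb x < v).
  { intros u v Huv. destruct (ratR_between u v Huv) as [w Hw]. destruct (Hsurj w) as [x <-]. eauto. }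
  exists (rho hQ hc b emb Hiso emb_dense). split.
  - intros r s E. destruct (hwl r s) as [q Hq]. apply Hq.
    exact (rho_faithful hQ hc b emb Hiso emb_dense r s E q).
  - apply rho_hom.
Qed.
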